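(* Let $f: G\twoheadrightarrow H$ be a surjection of finite groups and let $r\in\mathbb{Z}$ be coprime to $|G|$. Then $\mathbb{Z}H\otimes_{\mathbb{Z}G}(I_G,r)\cong (I_H,r)$ as $\mathbb{Z}H$-modules.
   Context: For a finite group $G$, $I_G$ is the augmentation ideal of $\mathbb{Z}G$ and $(I_G,r)$ is the ideal of $\mathbb{Z}G$ generated by $I_G$ and $r$. $\mathbb{Z}H$ is a right $\mathbb{Z}G$-module via $f$. *)

From HB Require Import structures.
From mathcomp Require Import all_boot all_order all_algebra all_fingroup.
Set Implicit Arguments. Unset Strict Implicit. Unset Printing Implicit Defensive.
Import GRing.Theory.
Local Open Scope ring_scope.

(* The integral group ring ZG of a finite group gT, as the additive group of
   integer-valued functions on gT: a : ZG gT stands for \sum_x a x * x. *)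
Notation ZG gT := {ffun gT -> int}.

(* Left multiplication by a group element g:  g * (\sum_x a_x x) = \sum_x a_x (g x). *)
Definition gl (gT : finGroupType) (g : gT) (a : ZG gT) : ZG gT :=
  [ffun y => a (g^-1 * y)%g].

(* Right multiplication by a group element g:  (\sum_x a_x x) * g = \sum_x a_x (x g). *)
Definition gr (gT : finGroupType) (a : ZG gT) (g : gT) : ZG gT :=
  [ffun y => a (y * g^-1)%g].

Definition augI (gT : finGroupType) (a : ZG gT) : Prop := \sum_(x : gT) a x = 0.

(* The (two-sided) ideal (I_G, r) generated by I_G and r; since I_G is an ideal
   and r is central, it equals I_G + r ZG. *)
Definition augIr (gT : finGroupType) (r : int) (a : ZG gT) : Prop :=
  exists i b : ZG gT, augI i /\ a = i + b *~ r.

(* beta : ZH x (I_G,r) -> A is biadditive and ZG-balanced, where ZH is a right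
   ZG-module via f (a . g = a * f g) and (I_G,r) is a left ZG-module (left
   multiplication).  Being balanced for the generators g in G, together with
   biadditivity, is equivalent to being ZG-balanced. *)
Definition balanced (gT hT : finGroupType) (f : gT -> hT) (r : int)
  (A : zmodType) (beta : ZG hT -> ZG gT -> A) : Prop :=
  [/\ forall a a' x, augIr r x -> beta (a + a') x = beta a x + beta a' x,
      forall a x x', augIr r x -> augIr r x' -> beta a (x + x') = beta a x + beta a x'
    & forall a g x, augIr r x -> beta (gr a (f g)) x = beta a (gl g x)].

(* (T, act, beta) is the tensor product ZH \otimes_{ZG} (I_G,r), with its left
   ZH-module structure: beta is the universal balanced map, and the action of
   h in H on T is additive and satisfies h . beta(a, x) = beta(h a, x). *)
Definition is_tensor_ZH_Ir (gT hT : finGroupType) (f : gT -> hT) (r : int)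
  (T : zmodType) (act : hT -> T -> T) (beta : ZG hT -> ZG gT -> T) : Prop :=
  [/\ balanced f r beta,
      forall h, {morph act h : u v / u + v},
      forall h a x, augIr r x -> beta (gl h a) x = act h (beta a x)
    & forall (A : zmodType) (b : ZG hT -> ZG gT -> A), balanced f r b ->
        exists phi : T -> A,
          [/\ {morph phi : u v / u + v},
              forall a x, augIr r x -> phi (beta a x) = b a x
            & forall psi : T -> A, {morph psi : u v / u + v} ->
                (forall a x, augIr r x -> psi (beta a x) = b a x) -> psi =1 phi]].

(* Pushing forward along f and multiplying in ZH gives a balanced map
   (a, x) |-> a * f(x) into (I_H, r), hence an additive map phi out of the
   tensor product, which is H-equivariant by uniqueness in the universal
   property.  Its inverse sends y to 1 (x) s(y), where s lifts the group
   elements of H along a set-theoretic section of f.  That this inverts phi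
   amounts to a (x) (g - g') = 0 whenever f g = f g'.  Writing g = k g' with
   k in ker f, the element t = a (x) (k g' - g') satisfies
   m t = a (x) (k^m g' - g'), so |G| t = 0, while
   r t = a (x) (k (r g') - r g') = a f(k) (x) r g' - a (x) r g' = 0;
   since r is coprime to |G|, t = 0. *)

From HB Require Import structures.
From mathcomp Require Import all_boot all_order all_algebra all_fingroup.
From mathcomp Require Import cyclic.
Import GRing.Theory.
Local Open Scope ring_scope.
Set Implicit Arguments.
Unset Strict Implicit.
Unset Printing Implicit Defensive.

Section AdditiveOn.
Variables (V W : zmodType) (S : zmodClosed V) (B : V -> W).
Hypothesis B_additive : {in S &, {morph B : u v / u + v}}.

Lemma in_raddf0 : B 0 = 0.
Proof.
by apply: (addrI (B 0)); rewrite -B_additive ?rpred0 // !addr0.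
Qed.

Lemma in_raddfN : {in S, {morph B : u / - u}}.
Proof.
move=> u Su; apply/eqP; rewrite -addr_eq0 -B_additive ?rpredN //.
by rewrite addNr in_raddf0.
Qed.

Lemma in_raddfB : {in S &, {morph B : u v / u - v}}.
Proof. by move=> u v Su Sv; rewrite B_additive ?rpredN // in_raddfN. Qed.

Lemma in_raddfMn n : {in S, {morph B : u / u *+ n}}.
Proof.
move=> u Su; elim: n => [|n IHn]; first by rewrite !mulr0n in_raddf0.
by rewrite !mulrS B_additive ?rpredMn // IHn.
Qed.

Lemma in_raddfMz z : {in S, {morph B : u / u *~ z}}.
Proof.
move=> u Su; case: z => n; first by rewrite -!pmulrn in_raddfMn.
by rewrite !NegzE !mulrNz in_raddfN ?rpredMz // -!pmulrn in_raddfMn.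
Qed.

Lemma in_morph_sum_mulz (I : finType) (F : I -> V) (c : I -> int) :
  (forall i, F i \in S) -> B (\sum_i F i *~ c i) = \sum_i B (F i) *~ c i.
Proof.
move=> SF.
rewrite (big_morph_in S B _ (rpred0 S) B_additive in_raddf0) => [|u v|i _].
- by apply: eq_bigr => i _; rewrite in_raddfMz.
- exact: rpredD.
- exact: rpredMz.
Qed.

End AdditiveOn.

Lemma morph_sum_mulz (V W : zmodType) (B : V -> W) (I : finType) (F : I -> V) c :
  {morph B : u v / u + v} -> B (\sum_i F i *~ c i) = \sum_i B (F i) *~ c i.
Proof.
move=> B_additive.
have B_zmod : zmod_morphism B.
  by move=> u v; apply/eqP; rewrite eq_sym subr_eq -B_additive subrK.
pose B' : {additive V -> W} := HB.pack B (GRing.isZmodMorphism.Build _ _ B B_zmod).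
by rewrite -[B _]/(B' _) raddf_sum; apply: eq_bigr => i _; apply: raddfMz.
Qed.

Lemma torsion_coprime_eq0 (M : zmodType) (t : M) (r : int) (n : nat) :
  coprime `|r|%N n -> t *~ r = 0 -> t *+ n = 0 -> t = 0.
Proof.
move=> r_coprime_n tr0 tn0.
have /coprimezP[[u v] /= uv_eq1] : coprimez r n by rewrite coprimezE absz_nat.
rewrite -[t]mulr1z -uv_eq1 mulrzDr (mulrC u) (mulrC v) !mulrzA tr0 -pmulrn tn0.
by rewrite !mul0rz addr0.
Qed.

Section GroupRing.
Variable gT : finGroupType.
Implicit Types (g u : gT) (r : int) (a x y : ZG gT).

Definition gdelta g : ZG gT := [ffun x => (x == g)%:R].

Definition aug a : int := \sum_x a x.

Lemma aug_is_zmod_morphism : zmod_morphism aug.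
Proof. by move=> a b; rewrite /aug -sumrB; apply: eq_bigr => x _; rewrite !ffunE. Qed.

HB.instance Definition _ :=
  GRing.isZmodMorphism.Build (ZG gT) int aug aug_is_zmod_morphism.

Lemma aug_gdelta g : aug (gdelta g) = 1.
Proof.
rewrite /aug (bigD1 g) //= ffunE eqxx big1 ?addr0 // => x /negbTE x_neq_g.
by rewrite ffunE x_neq_g.
Qed.

Lemma ffun_sum_gdelta a : a = \sum_g gdelta g *~ a g.
Proof.
apply/ffunP => x; rewrite sum_ffunE (bigD1 x) //= ffunMzE ffunE eqxx intz.
rewrite big1 ?addr0 // => g /negbTE g_neq_x.
by rewrite ffunMzE ffunE eq_sym g_neq_x mul0rz.
Qed.

Lemma gl_is_zmod_morphism g : zmod_morphism (gl g).
Proof. by move=> a b; apply/ffunP => x; rewrite !ffunE. Qed.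

HB.instance Definition _ g :=
  GRing.isZmodMorphism.Build (ZG gT) (ZG gT) (gl g) (gl_is_zmod_morphism g).

Lemma glM g u x : gl g (gl u x) = gl (g * u)%g x.
Proof. by apply/ffunP => y; rewrite !ffunE invMg mulgA. Qed.

Lemma gl1 x : gl 1%g x = x.
Proof. by apply/ffunP => y; rewrite !ffunE invg1 mul1g. Qed.

Lemma gr1 x : gr x 1%g = x.
Proof. by apply/ffunP => y; rewrite !ffunE invg1 mulg1. Qed.

Lemma gl_gdelta g u : gl g (gdelta u) = gdelta (g * u)%g.
Proof. by apply/ffunP => y; rewrite !ffunE -(inj_eq (mulgI g)) mulKVg. Qed.

Lemma gr_gdelta g u : gr (gdelta u) g = gdelta (u * g)%g.
Proof. by apply/ffunP => y; rewrite !ffunE -(inj_eq (mulIg g)) mulgKV. Qed.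

Lemma aug_gl g x : aug (gl g x) = aug x.
Proof.
by rewrite /aug (reindex_inj (mulgI g)); apply: eq_bigr => y _; rewrite ffunE mulKg.
Qed.

Definition augIr_pred r : {pred ZG gT} := [pred a | (r %| aug a)%Z].

Lemma augIr_pred_zmod_closed r : zmod_closed (augIr_pred r).
Proof.
split=> [|a b]; rewrite !inE ?raddf0 ?dvdz0 // => r_dvd_a r_dvd_b.
by rewrite raddfB rpredB.
Qed.

HB.instance Definition _ r :=
  GRing.isZmodClosed.Build (ZG gT) (augIr_pred r) (augIr_pred_zmod_closed r).

Lemma augIrP r a : reflect (augIr r a) (a \in augIr_pred r).
Proof.
apply: (iffP idP) => [|[i [b [aug_i ->]]]]; last first.
  by rewrite inE raddfD raddfMz /= [aug i]aug_i add0r mulrzz dvdz_mull.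
rewrite inE => /dvdzP[k aug_a].
exists (a - gdelta 1 *~ k *~ r), (gdelta 1 *~ k); split; last by rewrite subrK.
rewrite /augI -/(aug _) raddfB !raddfMz /= aug_gdelta aug_a.
by rewrite -mulrzA mulrzz mulN1r addrN.
Qed.

Lemma augIr_gl r g x : x \in augIr_pred r -> gl g x \in augIr_pred r.
Proof. by rewrite !inE aug_gl. Qed.

Lemma augIr_gdeltaB r g u : gdelta g - gdelta u \in augIr_pred r.
Proof. by rewrite inE raddfB /= !aug_gdelta subrr dvdz0. Qed.

Lemma augIr_gdeltaMz r g : gdelta g *~ r \in augIr_pred r.
Proof. by rewrite inE raddfMz /= aug_gdelta intz dvdzz. Qed.

Definition zgmul a y : ZG gT := \sum_g gl g y *~ a g.

Lemma zgmul_is_zmod_morphism a : zmod_morphism (zgmul a).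
Proof.
by move=> y z; rewrite /zgmul -sumrB; apply: eq_bigr => g _; rewrite raddfB mulrzBl.
Qed.

HB.instance Definition _ a :=
  GRing.isZmodMorphism.Build (ZG gT) (ZG gT) (zgmul a) (zgmul_is_zmod_morphism a).

Lemma zgmulDl a b y : zgmul (a + b) y = zgmul a y + zgmul b y.
Proof. by rewrite /zgmul -big_split; apply: eq_bigr => g _; rewrite ffunE mulrzDr. Qed.

Lemma zgmul1l y : zgmul (gdelta 1) y = y.
Proof.
rewrite /zgmul (bigD1 1%g) //= ffunE eqxx mulr1z gl1 big1 ?addr0 //.
by move=> g /negbTE g_neq1; rewrite ffunE g_neq1 mulr0z.
Qed.

Lemma gl_zgmul g a y : gl g (zgmul a y) = zgmul (gl g a) y.
Proof.
rewrite /zgmul raddf_sum [RHS](reindex_inj (mulgI g)); apply: eq_bigr => u _.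
by rewrite raddfMz /= glM ffunE mulKg.
Qed.

Lemma zgmul_gr g a y : zgmul (gr a g) y = zgmul a (gl g y).
Proof.
rewrite /zgmul (reindex_inj (mulIg g)); apply: eq_bigr => u _.
by rewrite glM ffunE mulgK.
Qed.

Lemma augIr_zgmul r a y : y \in augIr_pred r -> zgmul a y \in augIr_pred r.
Proof.
by move=> y_in; rewrite /zgmul rpred_sum // => g _; rewrite rpredMz ?augIr_gl.
Qed.

End GroupRing.

Arguments augIr_pred {gT} r.

Section Pushforward.
Variables (gT hT : finGroupType) (f : gT -> hT).
Implicit Types (g : gT) (h : hT) (r : int) (x : ZG gT) (y : ZG hT).

Definition zgmap x : ZG hT := [ffun h => \sum_(g | f g == h) x g].

Lemma zgmap_is_zmod_morphism : zmod_morphism zgmap.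
Proof.
move=> x x'; apply/ffunP => h; rewrite !ffunE -sumrB.
by apply: eq_bigr => g _; rewrite !ffunE.
Qed.

HB.instance Definition _ :=
  GRing.isZmodMorphism.Build (ZG gT) (ZG hT) zgmap zgmap_is_zmod_morphism.

Lemma zgmap_gdelta g : zgmap (gdelta g) = gdelta (f g).
Proof.
apply/ffunP => h; rewrite !ffunE; have [<-|fg_neq_h] := eqVneq (f g) h.
  rewrite (bigD1 g) //= ffunE eqxx big1 ?addr0 // => g' /andP[_ /negbTE g'_neq_g].
  by rewrite ffunE g'_neq_g.
rewrite big1 // => g' /eqP fg'_h; rewrite ffunE.
by have /negbTE -> : g' != g by apply: contra_neq fg_neq_h => <-.
Qed.

Lemma aug_zgmap x : aug (zgmap x) = aug x.
Proof.
by rewrite /aug (partition_big f predT) //=; apply: eq_bigr => h _; rewrite ffunE.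
Qed.

Lemma augIr_zgmap r x : x \in augIr_pred r -> zgmap x \in augIr_pred r.
Proof. by rewrite !inE aug_zgmap. Qed.

Lemma zgmap_gl (f_morph : {morph f : g g' / (g * g')%g}) g x :
  zgmap (gl g x) = gl (f g) (zgmap x).
Proof.
apply/ffunP => h; rewrite !ffunE (reindex_inj (mulgI g)).
apply: eq_big => [g'|g' _]; last by rewrite ffunE mulKg.
by rewrite f_morph -(inj_eq (mulgI (f g)^-1)%g) mulKg.
Qed.

Definition fsec h : gT := odflt 1%g [pick g | f g == h].

Definition zglift y : ZG gT := \sum_h gdelta (fsec h) *~ y h.

Lemma zglift_is_zmod_morphism : zmod_morphism zglift.
Proof.
by move=> y y'; rewrite /zglift -sumrB; apply: eq_bigr => h _; rewrite !ffunE mulrzBr.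
Qed.

HB.instance Definition _ :=
  GRing.isZmodMorphism.Build (ZG hT) (ZG gT) zglift zglift_is_zmod_morphism.

Lemma aug_zglift y : aug (zglift y) = aug y.
Proof.
by rewrite raddf_sum; apply: eq_bigr => h _; rewrite raddfMz /= aug_gdelta intz.
Qed.

Lemma augIr_zglift r y : y \in augIr_pred r -> zglift y \in augIr_pred r.
Proof. by rewrite !inE aug_zglift. Qed.

Lemma zglift_zgmap x : zglift (zgmap x) = \sum_g gdelta (fsec (f g)) *~ x g.
Proof.
rewrite [RHS](partition_big f predT) //=; apply: eq_bigr => h _.
by rewrite ffunE mulrz_sumr; apply: eq_bigr => g /eqP <-.
Qed.

Lemma f_fsec_f g : f (fsec (f g)) = f g.
Proof. by rewrite /fsec; case: pickP => [g' /eqP //|/(_ g)]; rewrite eqxx. Qed.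

Hypothesis f_surj : forall h, exists g, f g = h.

Lemma fsecK : cancel fsec f.
Proof. by move=> h; have [g <-] := f_surj h; apply: f_fsec_f. Qed.

Lemma zgliftK : cancel zglift zgmap.
Proof.
move=> y; rewrite /zglift raddf_sum [RHS]ffun_sum_gdelta; apply: eq_bigr => h _.
by rewrite raddfMz /= zgmap_gdelta fsecK.
Qed.

End Pushforward.

Section AugIrFunctionals.
Variables (gT : finGroupType) (A : zmodType) (r : int) (B : ZG gT -> A).
Hypothesis r_coprime : coprime `|r|%N #|gT|.
Hypothesis B_additive : {in augIr_pred r &, {morph B : u v / u + v}}.

Lemma gdeltaB_eq0_of_invariant (k u : gT) :
  {in augIr_pred r, forall y, B (gl k y) = B y} ->
  B (gdelta (k * u)%g - gdelta u) = 0.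
Proof.
move=> B_k_inv; set t := B _.
have B_pow m : B (gdelta (k ^+ m * u)%g - gdelta u) = t *+ m.
  elim: m => [|m IHm]; first by rewrite mul1g subrr mulr0n (in_raddf0 B_additive).
  have -> : gdelta (k ^+ m.+1 * u)%g - gdelta u =
      gl k (gdelta (k ^+ m * u)%g - gdelta u) + (gdelta (k * u)%g - gdelta u).
    by rewrite raddfB /= !gl_gdelta expgS mulgA addrA subrK.
  rewrite B_additive ?augIr_gl ?augIr_gdeltaB // B_k_inv ?augIr_gdeltaB //.
  by rewrite IHm mulrS addrC.
apply: (torsion_coprime_eq0 r_coprime).
  rewrite /t -(in_raddfMz B_additive) ?augIr_gdeltaB //.
  have -> : (gdelta (k * u)%g - gdelta u) *~ r = gl k (gdelta u *~ r) - gdelta u *~ r.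
    by rewrite raddfMz /= gl_gdelta mulrzBl.
  rewrite (in_raddfB B_additive) ?augIr_gl ?augIr_gdeltaMz //.
  by rewrite B_k_inv ?augIr_gdeltaMz // subrr.
by rewrite -B_pow -cardsT expg_cardG ?inE // mul1g subrr (in_raddf0 B_additive).
Qed.

Variables (hT : finGroupType) (f : gT -> hT).

Lemma in_raddf_zglift_zgmap :
  (forall g g', f g = f g' -> B (gdelta g - gdelta g') = 0) ->
  {in augIr_pred r, forall x, B (zglift f (zgmap f x)) = B x}.
Proof.
move=> B_fiber x r_dvd_x; apply/eqP; rewrite eq_sym -subr_eq0.
rewrite -(in_raddfB B_additive) ?augIr_zglift ?augIr_zgmap //.
have -> : x - zglift f (zgmap f x) = \sum_g (gdelta g - gdelta (fsec f (f g))) *~ x g.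
  rewrite zglift_zgmap {1}[x]ffun_sum_gdelta -sumrB.
  by apply: eq_bigr => g _; rewrite mulrzBl.
rewrite (in_morph_sum_mulz B_additive) => [|g]; last exact: augIr_gdeltaB.
by rewrite big1 // => g _; rewrite B_fiber ?f_fsec_f ?mul0rz.
Qed.

End AugIrFunctionals.

Record augIr_sub (gT : finGroupType) (r : int) :=
  AugIrSub { augIr_val : ZG gT; _ : augIr_val \in augIr_pred r }.

HB.instance Definition _ gT r := [isSub for @augIr_val gT r].
HB.instance Definition _ gT r := [Choice of augIr_sub gT r by <:].
HB.instance Definition _ gT r := [SubChoice_isSubZmodule of augIr_sub gT r by <:].

Section Tensor.
Variables (gT hT : finGroupType) (f : gT -> hT).
Hypothesis f_morph : {morph f : x y / (x * y)%g}.
Variables (r : int) (T : zmodType) (act : hT -> T -> T) (beta : ZG hT -> ZG gT -> T).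
Hypothesis tensor : is_tensor_ZH_Ir f r act beta.
Implicit Types (g : gT) (h : hT) (a : ZG hT) (x : ZG gT).

Lemma beta_addl x : x \in augIr_pred r -> {morph beta^~ x : a b / a + b}.
Proof. by case: tensor => -[beta_D _ _] _ _ _ /augIrP x_in a b; apply: beta_D. Qed.

Lemma beta_addr a : {in augIr_pred r &, {morph beta a : x y / x + y}}.
Proof.
by case: tensor => -[_ beta_D _] _ _ _ x y /augIrP x_in /augIrP y_in; apply: beta_D.
Qed.

Lemma beta_gr a g x : x \in augIr_pred r -> beta (gr a (f g)) x = beta a (gl g x).
Proof. by case: tensor => -[_ _ beta_bal] _ _ _ /augIrP; apply: beta_bal. Qed.

Lemma tensor_ext (A : zmodType) (p q : T -> A) :
  {morph p : u v / u + v} -> {morph q : u v / u + v} ->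
  (forall a x, x \in augIr_pred r -> p (beta a x) = q (beta a x)) -> p =1 q.
Proof.
move=> p_additive q_additive p_eq_q.
case: tensor => -[beta_Dl beta_Dr beta_bal] _ _ beta_universal.
have p_beta_bal : balanced f r (fun a x => p (beta a x)).
  by split=> [a b x x_in|a x y x_in y_in|a g x x_in];
    rewrite ?beta_Dl ?beta_Dr ?beta_bal ?p_additive.
have [phi [_ _ phi_unique]] := beta_universal A _ p_beta_bal.
move=> t; rewrite (phi_unique p) ?(phi_unique q) // => a x /augIrP x_in.
by rewrite p_eq_q.
Qed.

Definition mul_zgmap a x : augIr_sub hT r := insubd 0 (zgmul a (zgmap f x)).

Lemma mul_zgmapE a x : x \in augIr_pred r -> val (mul_zgmap a x) = zgmul a (zgmap f x).
Proof. by move=> x_in; rewrite insubdK // augIr_zgmul ?augIr_zgmap. Qed.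

Lemma mul_zgmap_balanced : balanced f r mul_zgmap.
Proof.
split=> [a b x /augIrP x_in|a x y /augIrP x_in /augIrP y_in|a g x /augIrP x_in];
  apply: val_inj => /=.
- by rewrite !mul_zgmapE // zgmulDl.
- by rewrite !mul_zgmapE ?rpredD // !raddfD.
- by rewrite !mul_zgmapE ?augIr_gl // zgmul_gr zgmap_gl.
Qed.

Hypothesis r_coprime : coprime `|r|%N #|gT|.

Lemma beta_fiber a g g' : f g = f g' -> beta a (gdelta g - gdelta g') = 0.
Proof.
move=> fg_eq_fg'; have f_k1 : f (g * g'^-1)%g = 1%g.
  by apply: (mulIg (f g')); rewrite -f_morph mulgKV mul1g.
rewrite -[g in gdelta g](mulgKV g').
rewrite (gdeltaB_eq0_of_invariant r_coprime (beta_addr a)) // => y y_in.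
by rewrite -beta_gr // f_k1 gr1.
Qed.

Lemma beta_zglift_zgmap a x :
  x \in augIr_pred r -> beta a (zglift f (zgmap f x)) = beta a x.
Proof. by apply: in_raddf_zglift_zgmap; [apply: beta_addr | apply: beta_fiber]. Qed.

Definition tensor_inv (y : ZG hT) : T := beta (gdelta 1) (zglift f y).

Lemma tensor_inv_additive : {in augIr_pred r &, {morph tensor_inv : y z / y + z}}.
Proof. by move=> y z y_in z_in; rewrite /tensor_inv raddfD beta_addr ?augIr_zglift. Qed.

Hypothesis f_surj : forall h, exists g, f g = h.

Lemma tensor_inv_zgmul a x :
  x \in augIr_pred r -> tensor_inv (zgmul a (zgmap f x)) = beta a x.
Proof.
move=> x_in.
pose X := \sum_h gl (fsec f h) x *~ a h.
have X_in : X \in augIr_pred r by rewrite rpred_sum // => h _; rewrite rpredMz ?augIr_gl.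
have -> : zgmul a (zgmap f x) = zgmap f X.
  rewrite raddf_sum; apply: eq_bigr => h _.
  by rewrite raddfMz /= zgmap_gl // fsecK.
rewrite /tensor_inv beta_zglift_zgmap //.
rewrite (in_morph_sum_mulz (beta_addr _)) => [|h]; last exact: augIr_gl.
rewrite [in RHS](ffun_sum_gdelta a) (morph_sum_mulz _ _ (beta_addl x_in)).
by apply: eq_bigr => h _; rewrite -beta_gr // gr_gdelta mul1g fsecK.
Qed.

Variable phi : T -> ZG hT.
Hypothesis phi_additive : {morph phi : u v / u + v}.
Hypothesis phi_augIr : forall t, phi t \in augIr_pred r.
Hypothesis phi_beta :
  forall a x, x \in augIr_pred r -> phi (beta a x) = zgmul a (zgmap f x).

Lemma phiK : cancel phi tensor_inv.
Proof.
apply: (tensor_ext (p := tensor_inv \o phi) (q := id)) => [u v|//|a x x_in] /=.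
  by rewrite phi_additive tensor_inv_additive.
by rewrite phi_beta ?tensor_inv_zgmul.
Qed.

Lemma tensor_invK : {in augIr_pred r, cancel tensor_inv phi}.
Proof. by move=> y y_in; rewrite phi_beta ?augIr_zglift // zgliftK // zgmul1l. Qed.

Lemma phi_act h t : phi (act h t) = gl h (phi t).
Proof.
case: tensor => _ act_additive beta_gl _.
apply: (tensor_ext (p := phi \o act h) (q := gl h \o phi)) => [u v|u v|a x x_in] /=.
- by rewrite act_additive phi_additive.
- by rewrite phi_additive raddfD.
- by rewrite -beta_gl; [rewrite !phi_beta // gl_zgmul | apply/augIrP].
Qed.

End Tensor.

Theorem lemma3p2 (gT hT : finGroupType) (f : gT -> hT)
  (f_morph : {morph f : x y / (x * y)%g})
  (f_surj : forall h : hT, exists g : gT, f g = h)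
  (r : int) (r_coprime : coprime `|r|%N #|gT|)
  (T : zmodType) (act : hT -> T -> T) (beta : ZG hT -> ZG gT -> T) :
  is_tensor_ZH_Ir f r act beta ->
  exists phi : T -> ZG hT,
    [/\ {morph phi : u v / u + v},
        injective phi,
        (forall t, augIr r (phi t)),
        (forall y, augIr r y -> exists t, phi t = y)
      & forall h t, phi (act h t) = gl h (phi t)].
Proof.
move=> tensor; have [_ _ _ beta_universal] := tensor.
have [phi0 [phi0_additive phi0_beta _]] :=
  beta_universal _ _ (mul_zgmap_balanced f_morph r).
pose phi t := val (phi0 t).
have phi_additive : {morph phi : u v / u + v} by move=> u v; rewrite /phi phi0_additive.
have phi_augIr t : phi t \in augIr_pred r by apply: valP.
have phi_beta a x : x \in augIr_pred r -> phi (beta a x) = zgmul a (zgmap f x).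
  by move=> x_in; rewrite /phi phi0_beta ?mul_zgmapE //; apply/augIrP.
exists phi; split=> //.
- apply: can_inj (tensor_inv f beta) _.
  exact: (phiK f_morph tensor r_coprime f_surj phi_additive phi_augIr phi_beta).
- by move=> t; apply/augIrP.
- move=> y /augIrP y_in; exists (tensor_inv f beta y).
  exact: (tensor_invK f_surj phi_beta).
- exact: (phi_act tensor phi_additive phi_beta).
Qed.
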